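(* Let $n\ge 6$ and let $G$ be a tree on $n$ vertices. Suppose $G\not\cong P_n$ and the degree sequence of $G$ is not $(3,2,\ldots,2,1,1,1)$ (one vertex of degree $3$, $n-4$ of degree $2$, three of degree $1$). Then $\mathrm{irr}_t(G)\ge 6n-20$. Equality holds if and only if the degree sequence of $G$ is $(3,3,2,\ldots,2,1,1,1,1)$, i.e. exactly two vertices of degree $3$, $n-6$ vertices of degree $2$ and $4$ vertices of degree $1$.
   Context: For a graph $G=(V,E)$ and $w\in V$, $d_G(w)$ is the degree of $w$. The total irregularity is $\mathrm{irr}_t(G)=\frac12\sum_{x,y\in V}|d_G(x)-d_G(y)|$, where the sum runs over all ordered pairs of vertices. $P_n$ is the path on $n$ vertices. Degree sequences are listed in nonincreasing order. *)

From mathcomp Require Import all_boot all_order.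
Set Implicit Arguments. Unset Strict Implicit. Unset Printing Implicit Defensive.

Section Graphs.
Variable T : finType.
Variable e : rel T.

Definition simple_graph : Prop := symmetric e /\ irreflexive e.

Definition deg (x : T) : nat := #|[set y | e x y]|.

Definition connected_graph : Prop := forall x y : T, connect e x y.

Definition acyclic_graph : Prop :=
  forall p : seq T, uniq p -> 3 <= size p -> ~~ cycle e p.

Definition is_tree : Prop := simple_graph /\ connected_graph /\ acyclic_graph.

(* total irregularity: (1/2) * sum over ordered pairs of |d(x) - d(y)|;
   the sum is even (symmetric), so nat division is exact. *)
Definition absdiff (a b : nat) : nat := (a - b) + (b - a).
Definition irr_t : nat :=
  (\sum_(x : T) \sum_(y : T) absdiff (deg x) (deg y)) %/ 2.

Definition deg_seq : seq nat := sort geq [seq deg x | x <- enum T].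
End Graphs.

Definition path_rel (n : nat) : rel 'I_n :=
  fun i j => (i.+1 == j :> nat) || (j.+1 == i :> nat).

Definition graph_iso (T U : finType) (e : rel T) (f : rel U) : Prop :=
  exists h : T -> U, bijective h /\ forall x y, f (h x) (h y) = e x y.

From mathcomp Require Import all_boot all_order zify.
Set Implicit Arguments. Unset Strict Implicit. Unset Printing Implicit Defensive.

(* Write c_t for the number of vertices of degree > t.  Layer-cake counting
   gives irr_t = sum_t c_t (n - c_t), and for a tree sum_t c_t = 2 (n - 1)
   with c_0 = n.  Hence m := sum_(t >= 2) c_t = n - 2 - c_1, and as c_t <= c_2
   for t >= 2, irr_t >= c_1 (n - c_1) + m (n - c_2).  If m = 0 every degree is
   at most 2 and the tree is the path; if m = 1 the degree sequence is
   (3,2,...,2,1,1,1); if m >= 2 an elementary quadratic estimate gives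
   irr_t >= 6n - 20, with equality only when m = c_2 = 2 and c_3 = 0, i.e.
   for the degree sequence (3,3,2,...,2,1,1,1,1). *)

Lemma sum_ord_ltn a N : \sum_(t < N) (t < a) = minn a N.
Proof.
elim: N => [|N IHN]; first by rewrite big_ord0; lia.
by rewrite big_ord_recr /= IHN; case: ltnP; lia.
Qed.

Lemma absdiff_sum_ord a b N : a <= N -> b <= N ->
  absdiff a b = \sum_(t < N) ((t < a) (+) (t < b)).
Proof.
move=> aN bN.
have xorE (p q : bool) : (p (+) q : nat) + 2 * (p && q) = p + q by case: p; case: q.
have sum_xorE : \sum_(t < N) ((t < a) (+) (t < b) : nat)
    + 2 * \sum_(t < N) (t < minn a b : nat)
    = \sum_(t < N) (t < a : nat) + \sum_(t < N) (t < b : nat).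
  rewrite big_distrr -!big_split /=; apply: eq_bigr => t _.
  by rewrite leq_min xorE.
move: sum_xorE; rewrite !sum_ord_ltn /absdiff; lia.
Qed.

Lemma sum_nat_pred (T : finType) (P : pred T) : \sum_(x : T) (P x : nat) = #|P|.
Proof.
rewrite -sum1_card [RHS]big_mkcond /=.
by apply: eq_bigr => x _; rewrite unfold_in; case: (P x).
Qed.

Lemma sum_addb_pred (T : finType) (P : pred T) :
  \sum_(x : T) \sum_(y : T) ((P x) (+) (P y) : nat) = 2 * (#|P| * (#|T| - #|P|)).
Proof.
have cardPC := cardC P.
have rowE x : \sum_(y : T) ((P x) (+) (P y) : nat) = if P x then #|[predC P]| else #|P|.
  rewrite -!sum_nat_pred; case: (P x); apply: eq_bigr => y _ //=.
rewrite (eq_bigr _ (fun x _ => rowE x)) (bigID P) /=.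
rewrite (eq_bigr (fun _ => #|[predC P]|)) => [|x ->] //.
rewrite [X in _ + X](eq_bigr (fun _ => #|P|)) => [|x /negbTE ->] //.
rewrite !sum_nat_const.
have -> : #|[pred x | ~~ P x]| = #|[predC P]| by apply: eq_card.
rewrite (_ : #|T| - #|P| = #|[predC P]|); lia.
Qed.

Section LayerCake.
Variables (T : finType) (f : T -> nat) (N : nat).
Hypothesis f_le : forall x, f x <= N.

Lemma sum_layer : \sum_(x : T) f x = \sum_(t < N) #|[pred x | t < f x]|.
Proof.
rewrite (eq_bigr (fun x => \sum_(t < N) (t < f x : nat))) => [|x _]; last first.
  by rewrite sum_ord_ltn; have := f_le x; lia.
rewrite exchange_big /=; apply: eq_bigr => t _.
exact: (sum_nat_pred [pred x | t < f x]).
Qed.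

Lemma sum_absdiff_layer : \sum_(x : T) \sum_(y : T) absdiff (f x) (f y) =
  2 * \sum_(t < N) #|[pred x | t < f x]| * (#|T| - #|[pred x | t < f x]|).
Proof.
transitivity (\sum_(t < N) \sum_(x : T) \sum_(y : T)
    (([pred z | t < f z] x) (+) ([pred z | t < f z] y) : nat)).
  rewrite [RHS]exchange_big; apply: eq_bigr => x _.
  rewrite [RHS]exchange_big; apply: eq_bigr => y _.
  exact: absdiff_sum_ord.
by rewrite big_distrr; apply: eq_bigr => t _; rewrite sum_addb_pred.
Qed.

End LayerCake.

Lemma count_mem_leq (s : seq nat) t :
  count_mem t s + count (leq t.+1) s = count (leq t) s.
Proof.
elim: s => //= a s IHs; rewrite -IHs.
by case: (ltngtP t a) => ta; rewrite ?ta /=; lia.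
Qed.

Lemma perm_eq_count_leq (s1 s2 : seq nat) :
  (forall t, count (leq t) s1 = count (leq t) s2) -> perm_eq s1 s2.
Proof.
move=> count12; apply/allP => t _ /=; apply/eqP.
apply: (@addIn (count (leq t.+1) s2)).
by rewrite -{1}count12 !count_mem_leq count12.
Qed.

Lemma sorted_geq_nseq_cat (a x : nat) (s : seq nat) :
  all (geq x) s -> sorted geq s -> sorted geq (nseq a x ++ s).
Proof.
have geq_trans : transitive geq by move=> y z u /= zy uz; apply: leq_trans uz zy.
move=> s_le s_sorted; elim: a => [|a IHa] //=.
by rewrite path_sortedE // IHa all_cat s_le all_nseq /= leqnn orbT.
Qed.

Section SimplePaths.
Variables (T : finType) (r : rel T).

Definition upath (q : seq T) : bool := uniq q && sorted r q.

Definition longest_upath (q : seq T) : Prop :=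
  upath q /\ forall q', upath q' -> size q' <= size q.

Lemma exists_longest_upath : exists q, longest_upath q.
Proof.
pose P k := [exists q : k.-tuple T, upath q].
have P0 : exists k, P k by exists 0; apply/existsP; exists [tuple].
have P_le k : P k -> k <= #|T|.
  by case/existsP => q /andP [Uq _]; rewrite -(size_tuple q) -(card_uniqP Uq) max_card.
have [k /existsP [q q_up] k_max] := ex_maxnP P0 P_le.
exists q; split=> // q' q'_up; rewrite size_tuple.
by apply: k_max; apply/existsP; exists (in_tuple q').
Qed.

Lemma longest_upath_head y s w :
  longest_upath (y :: s) -> r w y -> w \in y :: s.
Proof.
case=> /andP [Uq Sq] q_max rwy; apply: contraT => wq.
have := q_max (w :: y :: s); rewrite /= ltnn; apply.
by rewrite /upath cons_uniq wq Uq /= rwy.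
Qed.

Lemma longest_upath_last y s w :
  longest_upath (y :: s) -> r (last y s) w -> w \in y :: s.
Proof.
case=> /andP [Uq Sq] q_max rlw; apply: contraT => wq.
have := q_max (rcons (y :: s) w); rewrite size_rcons ltnn; apply.
by rewrite /upath rcons_uniq wq Uq /= rcons_path rlw andbT.
Qed.

End SimplePaths.

Lemma acyclic_no_chord (T : finType) (e : rel T) x0 q i j :
  acyclic_graph e -> uniq q -> sorted e q -> i.+1 < j -> j < size q ->
  ~~ e (nth x0 q j) (nth x0 q i).
Proof.
move=> acy Uq Sq ij jq; set t := take j.+1 q.
have size_t : size t = j.+1 by rewrite size_takel.
have tE : drop i t = nth x0 q i :: drop i.+1 t.
  by rewrite (drop_nth x0) ?nth_take ?size_t //; lia.
have lastE : last (nth x0 q i) (drop i.+1 t) = nth x0 q j.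
  transitivity (last x0 (drop i t)); first by rewrite tE.
  by rewrite -nth_last size_drop size_t nth_drop nth_take; [congr nth|]; lia.
have /acy : uniq (drop i t) by rewrite drop_uniq ?take_uniq.
rewrite size_drop size_t tE /= rcons_path lastE => /(_ ltac:(lia)).
have := drop_sorted i (take_sorted j.+1 Sq); rewrite -/t tE /= => ->.
by apply: contraNN => ->.
Qed.

Lemma connect_neq_step (T : finType) (r : rel T) x y :
  connect r x y -> x != y -> exists z, r x z.
Proof.
case/connectP => -[|z p] /= => [_ -> |/andP [rxz _] _ _]; first by rewrite eqxx.
by exists z.
Qed.

Lemma size_le_deg (T : finType) (e : rel T) x s :
  uniq s -> all (e x) s -> size s <= deg e x.
Proof.
move=> Us /allP s_nbr; rewrite -(card_uniqP Us); apply/subset_leq_card/subsetP.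
by move=> y /s_nbr; rewrite inE.
Qed.

Lemma deg_gt0 (T : finType) (e : rel T) x :
  connected_graph e -> 1 < #|T| -> 0 < deg e x.
Proof.
move=> e_conn; rewrite -cardsT (cardsD1 x) in_setT => /card_gt0P [y].
rewrite in_setD1 eq_sym => /andP [xy _].
have [z exz] := connect_neq_step (e_conn x y) xy.
by apply/card_gt0P; exists z; rewrite inE.
Qed.

Section Graph.
Variables (T : finType) (e : rel T).
Hypotheses (e_sym : symmetric e) (e_irr : irreflexive e) (e_acy : acyclic_graph e).

Lemma upath_nth_adj x0 q i j : upath e q -> i < size q -> j < size q ->
  e (nth x0 q i) (nth x0 q j) = (i.+1 == j) || (j.+1 == i).
Proof.
wlog ij : i j / i <= j.
  move=> adj q_up iq jq; case/orP: (leq_total i j) => ij; first exact: adj.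
  by rewrite e_sym orbC adj.
case/andP=> Uq Sq iq; case: (ltngtP i.+1 j) => [ij' | ji | <-] jq.
- rewrite e_sym (negbTE (acyclic_no_chord x0 e_acy Uq Sq ij' jq)).
  by apply/esym/norP; split; apply/eqP; lia.
- have -> : i = j by lia.
  by rewrite e_irr; apply/esym/norP; split; apply/eqP; lia.
- by move/(sortedP x0): Sq => /(_ i jq) ->.
Qed.

Lemma longest_upath_covers y s :
  connected_graph e -> (forall x, deg e x <= 2) -> longest_upath e (y :: s) ->
  forall z, z \in y :: s.
Proof.
move=> e_conn deg_le2 q_long z.
suff q_closed : closed e (mem (y :: s)).
  by rewrite -(closed_connect q_closed (e_conn y z)) mem_head.
apply: (intro_closed (sym_connect_sym e_sym)) => u w euw; rewrite inE => /predU1P [uy|us].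
  by apply: longest_upath_head q_long _; rewrite e_sym -uy.
apply: contraT => wq; have [/andP [Uq Sq] _] := q_long.
case: (splitPr us) Uq Sq q_long wq => s1 s2; case: s2 => [|b s2] Uq Sq q_long wq.
  by rewrite (longest_upath_last q_long) // last_cat in wq.
have /andP [_ /and3P [eu_pred eub _]] : path e y s1 && path e (last y s1) [:: u, b & s2].
  by rewrite -cat_path.
have pred_q : last y s1 \in y :: s1 ++ [:: u, b & s2].
  by rewrite -cat_cons mem_cat mem_last.
have b_q : b \in y :: s1 ++ [:: u, b & s2].
  by rewrite -cat_cons mem_cat !inE eqxx !orbT.
have pred_b : last y s1 != b.
  move: Uq; rewrite -cat_cons cat_uniq => /and3P [_ /hasPn/(_ b) b_s1 _].
  by apply: contraTneq (b_s1 _) => [<-|]; rewrite ?mem_last // !inE eqxx orbT.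
suff : 3 <= deg e u by rewrite leqNgt ltnS deg_le2.
apply: (@size_le_deg _ _ _ [:: last y s1; b; w]).
  rewrite /= !inE negb_or pred_b andbT.
  by apply/andP; split; apply: contraNneq wq => <-.
by rewrite /= e_sym eu_pred eub euw.
Qed.

Lemma deg_le2_iso_path : connected_graph e -> 0 < #|T| ->
  (forall x, deg e x <= 2) -> graph_iso e (@path_rel #|T|).
Proof.
move=> e_conn /card_gt0P [x0 _] deg_le2.
have [q q_long] := exists_longest_upath e.
have [y [s qE]] : exists y s, q = y :: s.
  case: q q_long => [|y s] [_ q_max]; last by exists y, s.
  by have := q_max [:: x0] isT.
rewrite qE in q_long; have q_up := q_long.1.
have q_cover := longest_upath_covers e_conn deg_le2 q_long.
have size_q : size (y :: s) = #|T|.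
  by rewrite -(card_uniqP (andP q_up).1); apply: eq_card => z; rewrite q_cover.
have index_lt x : index x (y :: s) < #|T| by rewrite -size_q index_mem.
exists (fun x => Ordinal (index_lt x)); split.
  exists (fun i : 'I_#|T| => nth x0 (y :: s) i) => [x | i]; first by rewrite nth_index.
  by apply/val_inj/index_uniq; rewrite ?size_q // (andP q_up).1.
move=> x1 x2; rewrite -[in RHS](nth_index x0 (q_cover x1)).
by rewrite -[in RHS](nth_index x0 (q_cover x2)) upath_nth_adj ?index_mem.
Qed.

Definition induced (S : {set T}) : rel T :=
  [rel x y | [&& x \in S, y \in S & e x y]].

Definition deg_in (S : {set T}) (x : T) : nat := #|[set y in S | e x y]|.

Definition connected_in (S : {set T}) : Prop :=
  forall x y, x \in S -> y \in S -> connect (induced S) x y.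

Lemma induced_sub (S : {set T}) : subrel (induced S) e.
Proof. by move=> x y /and3P []. Qed.

Lemma induced_sym (S : {set T}) : symmetric (induced S).
Proof. by move=> x y; rewrite /induced /= e_sym andbCA. Qed.

Lemma exists_leaf (S : {set T}) :
  1 < #|S| -> connected_in S -> exists2 v, v \in S & deg_in S v = 1.
Proof.
move=> /card_gt1P [a [b [aS bS ab]]] S_conn.
have [z az] := connect_neq_step (S_conn a b aS bS) ab.
have [q [q_up q_max]] := exists_longest_upath (induced S).
have : 1 < size q.
  apply: leq_trans (q_max [:: a; z] _) => //; rewrite /upath /= inE az !andbT.
  by apply: contraTneq (induced_sub az) => ->; rewrite e_irr.
case: q q_up q_max => [|y [|y' s]] // q_up q_max _.
have /andP [Uq /andP [/and3P [yS y'S eyy'] _]] := q_up.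
have Sq : sorted e [:: y, y' & s] := sub_sorted (@induced_sub S) (andP q_up).2.
exists y => //.
apply/eqP/cards1P; exists y'; apply/setP => w; rewrite !inE.
apply/andP/eqP => [[wS eyw] | ->] //.
have : w \in [:: y, y' & s].
  apply: longest_upath_head (conj q_up q_max) _.
  by rewrite /induced /= wS yS e_sym eyw.
move=> w_in; move: (nth_index y w_in) (w_in); rewrite -index_mem.
case: (index w _) => [|[|k]] /= wE k_lt //.
  by rewrite -wE e_irr in eyw.
have := acyclic_no_chord y e_acy Uq Sq (i := 0) (j := k.+2) isT k_lt.
by rewrite /= wE e_sym eyw.
Qed.

Lemma path_induced_setD1 (S : {set T}) v x p :
  path (induced S) x p -> v \notin x :: p -> path (induced (S :\ v)) x p.
Proof.
elim: p x => [|y p IHp] x //=.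
rewrite !in_cons !negb_or => /andP [/and3P [xS yS exy] p_path] /and3P [xv yv vp].
rewrite /induced /= !in_setD1 eq_sym xv eq_sym yv xS yS exy.
by apply: IHp; rewrite // in_cons negb_or yv.
Qed.

Lemma connected_in_setD1 (S : {set T}) v :
  connected_in S -> v \in S -> deg_in S v = 1 -> connected_in (S :\ v).
Proof.
move=> S_conn vS /eqP/cards1P [u nbrE] x y.
rewrite !in_setD1 => /andP [xv xS] /andP [yv yS].
case/connectP: (S_conn x y xS yS) => p0 /shortenP [p p_path Up _] yE.
apply/connectP; exists p; rewrite -?yE //; apply: path_induced_setD1 => //.
rewrite in_cons negb_or eq_sym xv /=; apply/negP => vp.
case: (splitPr vp) p_path Up yE => p1 p2; case: p2 => [|b p2] p_path Up yE.
  by rewrite yE last_cat eqxx in yv.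
have nbr_u z : induced S v z -> z = u.
  by case/and3P=> _ zS evz; apply/set1P; rewrite -nbrE inE zS.
move: p_path; rewrite cat_path => /andP [_] /= /and3P [pv vb _].
rewrite induced_sym in pv.
move: Up; rewrite -cat_cons cat_uniq => /and3P [_ /hasPn/(_ b) b_notin _].
have b_in : b \in [:: v, b & p2] by rewrite !inE eqxx orbT.
by move: (b_notin b_in); rewrite (nbr_u _ vb) -(nbr_u _ pv) mem_last.
Qed.

Lemma sum_deg_in_tree k (S : {set T}) :
  #|S| = k.+1 -> connected_in S -> \sum_(x in S) deg_in S x = 2 * k.
Proof.
elim: k S => [|k IHk] S S_size S_conn.
  move/eqP: S_size => /cards1P [x ->]; rewrite big_set1.
  apply/eqP; rewrite cards_eq0; apply/eqP/setP => y; rewrite !inE.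
  by case: eqP => // ->; rewrite e_irr.
have [v vS v_leaf] := exists_leaf (ltac:(lia) : 1 < #|S|) S_conn.
have S'_size : #|S :\ v| = k.+1 by move: S_size; rewrite (cardsD1 v) vS; lia.
rewrite (big_setD1 _ vS) v_leaf.
rewrite (eq_bigr (fun x => deg_in (S :\ v) x + (e v x : nat))) => [|x]; last first.
  rewrite in_setD1 => /andP [xv xS].
  rewrite /deg_in (cardsD1 v [set y in S | e x y]) inE vS e_sym /= addnC.
  by congr (_ + _); apply: eq_card => y; rewrite !inE andbA.
rewrite big_split /= (IHk _ S'_size (connected_in_setD1 S_conn vS v_leaf)).
suff -> : \sum_(x in S :\ v) (e v x : nat) = 1 by lia.
rewrite -v_leaf big_mkcond /=.
rewrite (eq_bigr (fun x => ((x \in S :\ v) && e v x : nat))) => [|x _]; last first.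
  by case: (x \in S :\ v).
rewrite sum_nat_pred; apply: eq_card => x; rewrite unfold_in !inE.
by case: (eqVneq x v) => [->|] /=; rewrite ?e_irr ?andbF.
Qed.

Lemma sum_deg_tree : connected_graph e -> \sum_(x : T) deg e x = 2 * (#|T| - 1).
Proof.
move=> e_conn; case: (posnP #|T|) => [T0 | T_gt0].
  by rewrite T0 big1 // => x _; move: T0; rewrite -cardsT (cardsD1 x) in_setT.
have T_conn : connected_in [set: T].
  by move=> x y _ _; rewrite (@eq_connect _ _ e) // => a b; rewrite /induced /= !in_setT.
rewrite -(sum_deg_in_tree (_ : #|[set: T]| = (#|T| - 1).+1) T_conn) ?cardsT; last lia.
by apply: eq_big => [x|x _]; rewrite ?in_setT //; apply: eq_card => y; rewrite !inE.
Qed.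

End Graph.

Lemma count_enum (T : finType) (P : pred T) : count P (enum T) = #|P|.
Proof. by rewrite cardE /enum_mem size_filter (@eq_filter _ _ predT) // filter_predT. Qed.

Definition ndeg_gt (T : finType) (e : rel T) (t : nat) : nat := #|[pred x | t < deg e x]|.

Section DegreeCounts.
Variables (T : finType) (e : rel T).

Lemma deg_le_card x : deg e x <= #|T|.
Proof. exact: max_card. Qed.

Lemma ndeg_gt_mono s t : s <= t -> ndeg_gt e t <= ndeg_gt e s.
Proof.
move=> st; apply/subset_leq_card/subsetP => x; rewrite !inE.
exact: leq_ltn_trans.
Qed.

Lemma ndeg_gt_eq0 t : (ndeg_gt e t == 0) = [forall x, deg e x <= t].
Proof.
apply/eqP/forallP => [ndeg0 x | le_t]; last first.
  by apply: eq_card0 => x; rewrite !inE ltnNge le_t.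
rewrite leqNgt; apply/negP => tx.
suff : 0 < ndeg_gt e t by rewrite ndeg0.
by apply/card_gt0P; exists x.
Qed.

Lemma irr_t_layer :
  irr_t e = \sum_(t < #|T|) ndeg_gt e t * (#|T| - ndeg_gt e t).
Proof. by rewrite /irr_t (sum_absdiff_layer deg_le_card) mulKn. Qed.

Lemma sum_deg_layer : \sum_(x : T) deg e x = \sum_(t < #|T|) ndeg_gt e t.
Proof. exact: sum_layer deg_le_card. Qed.

Lemma count_deg_seq t : count (leq t.+1) (deg_seq e) = ndeg_gt e t.
Proof.
have /permP -> : perm_eq (deg_seq e) [seq deg e x | x <- enum T] by rewrite perm_sort.
by rewrite count_map count_enum.
Qed.

Lemma deg_seq_eq s : sorted geq s -> size s = #|T| ->
  (forall t, count (leq t.+1) s = ndeg_gt e t) -> deg_seq e = s.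
Proof.
move=> s_sorted s_size s_count.
have geq_total : total geq by move=> a b; exact: leq_total.
have geq_trans : transitive geq by move=> a b c /= ba cb; exact: leq_trans cb ba.
have geq_anti : antisymmetric geq by move=> a b /= ab; apply/eqP; rewrite eqn_leq andbC.
rewrite -(sorted_sort geq_trans s_sorted).
apply/(perm_sortP geq_total geq_trans geq_anti)/perm_eq_count_leq => -[|t].
  by rewrite !(@eq_count _ _ predT) // !count_predT size_map -cardE s_size.
by rewrite s_count count_map count_enum.
Qed.

Lemma deg_seq_le3 : (forall x, 0 < deg e x <= 3) ->
  deg_seq e = nseq (ndeg_gt e 2) 3 ++ nseq (ndeg_gt e 1 - ndeg_gt e 2) 2
              ++ nseq (#|T| - ndeg_gt e 1) 1.
Proof.
move=> deg_13.
have ndeg0 : ndeg_gt e 0 = #|T|.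
  by apply: eq_card => x; rewrite !inE (andP (deg_13 x)).1.
have ndeg3 t : ndeg_gt e t.+3 = 0.
  by apply/eqP; rewrite ndeg_gt_eq0; apply/forallP => x; have := deg_13 x; lia.
have ndeg12 := ndeg_gt_mono (leqnSn 1).
have ndeg01 := ndeg_gt_mono (leq0n 1).
rewrite -ndeg0; apply: deg_seq_eq.
- rewrite -[nseq _ 1]cats0.
  by repeat apply: sorted_geq_nseq_cat; rewrite ?all_cat ?all_nseq ?orbT.
- by rewrite !size_cat !size_nseq -ndeg0; lia.
- by case=> [|[|[|t]]]; rewrite !count_cat !count_nseq /= ?ndeg3; lia.
Qed.

End DegreeCounts.

Lemma sum_nat_split3 (F : nat -> nat) n : 2 < n ->
  \sum_(0 <= t < n) F t = F 0 + F 1 + F 2 + \sum_(3 <= t < n) F t.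
Proof.
move=> n_gt2; rewrite big_ltn; last lia.
by rewrite big_ltn 1?big_ltn ?addnA //; lia.
Qed.

Section TreeDegrees.
Variables (T : finType) (e : rel T).
Hypothesis e_tree : is_tree e.
Hypothesis T_gt2 : 2 < #|T|.

Local Notation n := #|T|.
Local Notation c := (ndeg_gt e).

Lemma ndeg_gt0_tree : c 0 = n.
Proof.
have [[_ _] [e_conn _]] := e_tree.
by apply: eq_card => x; rewrite !inE deg_gt0 //; lia.
Qed.

Lemma sum_ndeg_gt_tree : c 1 + c 2 + \sum_(3 <= t < n) c t = n - 2.
Proof.
have [[e_sym e_irr] [e_conn e_acy]] := e_tree.
have := sum_deg_tree e_sym e_irr e_acy e_conn.
by rewrite sum_deg_layer -(big_mkord xpredT c) sum_nat_split3 // ndeg_gt0_tree; lia.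
Qed.

Lemma irr_t_tree :
  irr_t e = c 1 * (n - c 1) + c 2 * (n - c 2) + \sum_(3 <= t < n) c t * (n - c t).
Proof.
rewrite irr_t_layer -(big_mkord xpredT (fun t => c t * (n - c t))).
by rewrite sum_nat_split3 // ndeg_gt0_tree subnn muln0.
Qed.

Lemma irr_t_tree_ge : c 1 * (n - c 1) + (n - 2 - c 1) * (n - c 2) <= irr_t e.
Proof.
rewrite irr_t_tree -sum_ndeg_gt_tree.
rewrite (_ : _ + _ + _ - c 1 = c 2 + \sum_(3 <= t < n) c t); last lia.
rewrite mulnDl big_distrl -!addnA leq_add2l leq_add2l.
rewrite big_nat_cond [X in _ <= X]big_nat_cond; apply: leq_sum => t /andP [/andP [t3 _] _].
by rewrite leq_mul2l leq_sub2l ?orbT // ndeg_gt_mono //; lia.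
Qed.

Lemma irr_t_tree_le3 : c 3 = 0 -> irr_t e = c 1 * (n - c 1) + c 2 * (n - c 2).
Proof.
move=> c3; rewrite irr_t_tree big_nat_cond big1 ?addn0 // => t /andP [/andP [t3 _] _].
by have := ndeg_gt_mono e t3; rewrite c3 leqn0 => /eqP ->.
Qed.

Lemma ndeg_gt3_tree : 3 < n -> c 2 + c 3 <= n - 2 - c 1.
Proof. by move=> n_gt3; have := sum_ndeg_gt_tree; rewrite big_ltn //; lia. Qed.

End TreeDegrees.

Lemma irr_arith_bound n c1 c2 m :
  6 <= n -> c1 + m + 2 = n -> c2 <= m -> c2 <= c1 -> 2 <= m ->
  6 * n - 20 <= c1 * (n - c1) + m * (n - c2) /\
  (c1 * (n - c1) + m * (n - c2) = 6 * n - 20 -> m = 2 /\ c2 = 2).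
Proof.
move=> n_ge6 nE c2m c21 m_ge2; rewrite (_ : n - c1 = m + 2); last lia.
have [c1_ge_m | c1_lt_m] := leqP m c1.
- have : m * (n - m) <= m * (n - c2) by rewrite leq_mul2l leq_sub2l ?orbT.
  nia.
- have : m * (n - c1) <= m * (n - c2) by rewrite leq_mul2l leq_sub2l ?orbT.
  nia.
Qed.

Theorem theorem7 (T : finType) (e : rel T) :
  6 <= #|T| ->
  is_tree e ->
  ~ graph_iso e (@path_rel #|T|) ->
  deg_seq e <> 3 :: nseq (#|T| - 4) 2 ++ nseq 3 1 ->
  6 * #|T| - 20 <= irr_t e /\
  (irr_t e = 6 * #|T| - 20 <->
   deg_seq e = [:: 3; 3] ++ nseq (#|T| - 6) 2 ++ nseq 4 1).
Proof.
move=> n_ge6 e_tree not_path not_ds1.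
have [[e_sym e_irr] [e_conn e_acy]] := e_tree.
have n_gt2 : 2 < #|T| by lia.
have irr_ge := irr_t_tree_ge e_tree n_gt2.
have irr_le3 := irr_t_tree_le3 e_tree n_gt2.
have c23 := ndeg_gt3_tree e_tree n_gt2 (ltac:(lia) : 3 < #|T|).
have c12 := ndeg_gt_mono e (leqnSn 1).
(* [set] identifies the convertible but syntactically different elaborations
   of #|T| coming from the statement and from the lemmas, so that lia sees one atom. *)
set n := #|T| in n_ge6 not_path not_ds1 n_gt2 irr_ge irr_le3 c23 *.
set c1 := ndeg_gt e 1 in irr_ge irr_le3 c23 c12 *.
set c2 := ndeg_gt e 2 in irr_ge irr_le3 c23 c12 *.
have ds_le3 : ndeg_gt e 3 = 0 -> deg_seq e = nseq c2 3 ++ nseq (c1 - c2) 2 ++ nseq (n - c1) 1.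
  move/eqP; rewrite ndeg_gt_eq0 => /forallP deg_le3.
  by apply: deg_seq_le3 => x; rewrite deg_gt0 ?deg_le3 //; lia.
have [c2_0 | c2_gt0] := posnP c2.
  case: not_path; apply: deg_le2_iso_path => //; first lia.
  by apply/forallP; rewrite -ndeg_gt_eq0 -/c2 c2_0.
have [m_le1 | m_ge2] := leqP (n - 2 - c1) 1.
  have [c1E c2E] : c1 = n - 3 /\ c2 = 1 by lia.
  case: not_ds1; rewrite ds_le3; last lia.
  by rewrite c1E c2E -subnDA subKn //; lia.
have [irr_lb tight] :=
  @irr_arith_bound n c1 c2 (n - 2 - c1) n_ge6 ltac:(lia) ltac:(lia) c12 m_ge2.
split; first lia.
split=> [irr_eq | ds].
- have [c1E c2E] : c1 = n - 4 /\ c2 = 2 by have := tight ltac:(lia); lia.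
  rewrite ds_le3; last lia.
  by rewrite c1E c2E -subnDA subKn //; lia.
- have [c1E c2E c3E] : [/\ c1 = n - 4, c2 = 2 & ndeg_gt e 3 = 0].
    by rewrite /c1 /c2 -!count_deg_seq ds /= !count_cat !count_nseq /=; split; lia.
  by rewrite irr_le3 // c1E c2E subKn; lia.
Qed.
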